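(* Consider the real system, for unknown real functions $u,v,w$ of $(x,y,z)$ and a given real function $q(x,y,z)$: $$-(u_x+v_y+w_z)+u^2+v^2+w^2-q=0,\quad w_y-v_z=0,\quad u_z-w_x=0,\quad v_x-u_y=0.$$ A vector field $\hat v=\xi\partial_x+\eta\partial_y+\tau\partial_z+\phi\partial_u+\psi\partial_v+\zeta\partial_w$, with coefficients depending on $(x,y,z,u,v,w)$, is the infinitesimal generator of a group of Lie point symmetries of this system if and only if there are real constants $a_1,\dots,a_{10}$ such that $\xi=a_1(x^2-y^2-z^2)+2a_2xy+2a_3xz-a_4z+a_5x-a_6y+a_9$, $\eta=2a_1xy+a_2(y^2-x^2-z^2)+2a_3yz+a_5y+a_6x-a_7z+a_{10}$, $\tau=2a_1xz+2a_2yz+a_3(z^2-x^2-y^2)+a_4x+a_5z+a_7y+a_8$, $\phi=a_1(1-2(xu+yv+zw))+2a_2(xv-yu)+2a_3(xw-zu)-a_4w-a_5u-a_6v$, $\psi=2a_1(yu-xv)+a_2(1-2(xu+yv+zw))-2a_3(zv-yw)-a_5v+a_6u-a_7w$, $\zeta=2a_1(zu-xw)+2a_2(zv-yw)+a_3(1-2(xu+yv+zw))+a_4u-a_5w+a_7v$, and the potential $q$ satisfies $$[a_1(y^2+z^2-x^2)-2a_2xy-2a_3xz+a_4z-a_5x+a_6y-a_9]q_x+[-2a_1xy+a_2(x^2+z^2-y^2)-2a_3yz-a_5y-a_6x+a_7z-a_{10}]q_y$$ $$+[-2a_1xz-2a_2yz+a_3(x^2+y^2-z^2)-a_4x-a_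5z-a_7y-a_8]q_z-2[a_5+2(a_1x+a_2y+a_3z)]q=0.$$
   Context: This system is the componentwise form of the three-dimensional Riccati equation $D\mathbf Q+|\mathbf Q|^2=q$ for $\mathbf Q=ue_1+ve_2+we_3$ real-valued (equivalently $-\mathrm{div}\,\mathbf Q+|\mathbf Q|^2=q$, $\mathrm{rot}\,\mathbf Q=0$). A Lie point symmetry group is a local group of transformations of $(x,y,z,u,v,w)$ mapping solutions of the system to solutions; its generator is determined by the standard infinitesimal criterion that the first prolongation of $\hat v$ annihilates each equation on the solution set. *)

From Stdlib Require Import Reals Lra List ClassicalEpsilon.
Open Scope R_scope.

(* Derivative of a one-variable function at a point (the value l with
   derivable_pt_lim f a l when it exists; an arbitrary value otherwise). *)
Definition pder (f : R -> R) (a : R) : R :=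
  epsilon (inhabits 0) (fun l => derivable_pt_lim f a l).

(* Points of R^n are encoded as nat -> R (only coordinates < n matter). *)
Definition upd (p : nat -> R) (i : nat) (t : R) : nat -> R :=
  fun j => if Nat.eqb j i then t else p j.

Definition pd (i : nat) (f : (nat -> R) -> R) : (nat -> R) -> R :=
  fun p => pder (fun t => f (upd p i t)) (p i).

Fixpoint iter_pd (l : list nat) (f : (nat -> R) -> R) : (nat -> R) -> R :=
  match l with nil => f | i :: l' => pd i (iter_pd l' f) end.

Definition cont_n (n : nat) (f : (nat -> R) -> R) : Prop :=
  forall p eps, 0 < eps -> exists delta, 0 < delta /\
    forall p', (forall j, (j < n)%nat -> Rabs (p' j - p j) < delta) ->
      Rabs (f p' - f p) < eps.

Definition smooth_n (n : nat) (f : (nat -> R) -> R) : Prop :=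
  forall l : list nat, (forall i, In i l -> (i < n)%nat) ->
    cont_n n (iter_pd l f) /\
    (forall i, (i < n)%nat -> forall p,
       derivable_pt_lim (fun t => iter_pd l f (upd p i t)) (p i)
                        (pd i (iter_pd l f) p)).

Definition F3 := R -> R -> R -> R.
Definition F6 := R -> R -> R -> R -> R -> R -> R.

Definition pt3 (x y z : R) : nat -> R :=
  fun j => match j with O => x | S O => y | S (S O) => z | _ => 0 end.
Definition pt6 (x y z u v w : R) : nat -> R :=
  fun j => match j with O => x | S O => y | S (S O) => z
    | S (S (S O)) => u | S (S (S (S O))) => v | S (S (S (S (S O)))) => w
    | _ => 0 end.
Definition unc3 (F : F3) : (nat -> R) -> R :=
  fun p => F (p 0%nat) (p 1%nat) (p 2%nat).
Definition unc6 (F : F6) : (nat -> R) -> R :=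
  fun p => F (p 0%nat) (p 1%nat) (p 2%nat) (p 3%nat) (p 4%nat) (p 5%nat).

Definition smooth3 (F : F3) : Prop := smooth_n 3 (unc3 F).
Definition smooth6 (F : F6) : Prop := smooth_n 6 (unc6 F).

(* partial derivatives: D3 0/1/2 = d/dx, d/dy, d/dz;
   D6 0..5 = d/dx, d/dy, d/dz, d/du, d/dv, d/dw *)
Definition D3 (i : nat) (F : F3) : F3 :=
  fun x y z => pd i (unc3 F) (pt3 x y z).
Definition D6 (i : nat) (F : F6) : F6 :=
  fun x y z u v w => pd i (unc6 F) (pt6 x y z u v w).

Definition sel3 {A : Type} (a b c : A) (k : nat) : A :=
  match k with O => a | S O => b | _ => c end.

(* First-order jet coordinates: J k i = derivative of the k-th dependent
   variable (0 = u, 1 = v, 2 = w) w.r.t. the i-th independent variable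
   (0 = x, 1 = y, 2 = z). *)

Definition TD (i : nat) (F : F6) (x y z u v w : R) (J : nat -> nat -> R) : R :=
  D6 i F x y z u v w
  + J 0%nat i * D6 3 F x y z u v w
  + J 1%nat i * D6 4 F x y z u v w
  + J 2%nat i * D6 5 F x y z u v w.

(* Coefficient of d/d(U^k_i) in the first prolongation of
   xi d_x + eta d_y + tau d_z + phi d_u + psi d_v + zeta d_w :
   Phi^k_i = D_i Phi^k - sum_j U^k_j D_i xi^j. *)
Definition prol1 (xi eta tau phi psi zeta : F6) (k i : nat)
    (x y z u v w : R) (J : nat -> nat -> R) : R :=
  TD i (sel3 phi psi zeta k) x y z u v w J
  - (J k 0%nat * TD i xi x y z u v w J
     + J k 1%nat * TD i eta x y z u v w J
     + J k 2%nat * TD i tau x y z u v w J).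

Definition Eq1 (q : F3) (x y z u v w : R) (J : nat -> nat -> R) : R :=
  - (J 0%nat 0%nat + J 1%nat 1%nat + J 2%nat 2%nat)
  + u ^ 2 + v ^ 2 + w ^ 2 - q x y z.
Definition Eq2 (J : nat -> nat -> R) : R := J 2%nat 1%nat - J 1%nat 2%nat.
Definition Eq3 (J : nat -> nat -> R) : R := J 0%nat 2%nat - J 2%nat 0%nat.
Definition Eq4 (J : nat -> nat -> R) : R := J 1%nat 0%nat - J 0%nat 1%nat.

(* Infinitesimal criterion: pr^(1) v annihilates each equation on the
   solution set (in first-order jet space) of the system. *)
Definition is_symmetry_generator (q : F3) (xi eta tau phi psi zeta : F6) : Prop :=
  forall (x y z u v w : R) (J : nat -> nat -> R),
    Eq1 q x y z u v w J = 0 -> Eq2 J = 0 -> Eq3 J = 0 -> Eq4 J = 0 ->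
    let P := fun k i => prol1 xi eta tau phi psi zeta k i x y z u v w J in
    (- (xi x y z u v w * D3 0 q x y z + eta x y z u v w * D3 1 q x y z
        + tau x y z u v w * D3 2 q x y z)
     + 2 * u * phi x y z u v w + 2 * v * psi x y z u v w
     + 2 * w * zeta x y z u v w
     - (P 0%nat 0%nat + P 1%nat 1%nat + P 2%nat 2%nat) = 0)
    /\ P 2%nat 1%nat - P 1%nat 2%nat = 0
    /\ P 0%nat 2%nat - P 2%nat 0%nat = 0
    /\ P 1%nat 0%nat - P 0%nat 1%nat = 0.

(* Applying the infinitesimal criterion to suitably chosen first-order jets
   splits it into determining equations: xi, eta, tau do not depend on
   (u, v, w) and form a conformal Killing field of R^3 with conformal factor
   nu = xi_x, while phi, psi, zeta are affine in (u, v, w) with slopes given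
   by the derivatives of (xi, eta, tau).  Differentiating the conformal
   Killing equations (Schwarz) kills all second derivatives of nu, so nu is
   affine and (xi, eta, tau) is an infinitesimal Moebius transformation.  The
   remaining equation is a quadratic polynomial in (u, v, w); its coefficients
   give the u-independent parts of phi, psi, zeta and the condition on q. *)

From Stdlib Require Import Reals Lra Lia List FunctionalExtensionality ClassicalEpsilon.
From Coquelicot Require Import Coquelicot.
Open Scope R_scope.

Lemma pder_of_derivable f a l : derivable_pt_lim f a l -> pder f a = l.
Proof.
  intro H. unfold pder.
  pose proof (epsilon_spec (inhabits 0) (fun l => derivable_pt_lim f a l)
                (ex_intro _ l H)) as H2.
  exact (uniqueness_limite _ _ _ _ H2 H).
Qed.

Lemma pd_of_derivable f i p l :
  derivable_pt_lim (fun t => f (upd p i t)) (p i) l -> pd i f p = l.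
Proof. intro H. unfold pd. now apply pder_of_derivable. Qed.

Lemma pd_const k c p : pd k (fun _ => c) p = 0.
Proof. apply pd_of_derivable, derivable_pt_lim_const. Qed.

Lemma upd_same p i t : upd p i t i = t.
Proof. unfold upd. now rewrite Nat.eqb_refl. Qed.

Lemma upd_upd p i s t : upd (upd p i s) i t = upd p i t.
Proof.
  apply functional_extensionality; intro j. unfold upd. now destruct (Nat.eqb j i).
Qed.

Lemma upd_id p i : upd p i (p i) = p.
Proof.
  apply functional_extensionality; intro j. unfold upd.
  destruct (Nat.eqb j i) eqn:E; auto. apply Nat.eqb_eq in E. now subst.
Qed.

Lemma upd_comm p i j s t : i <> j -> upd (upd p i s) j t = upd (upd p j t) i s.
Proof.
  intro H. apply functional_extensionality; intro k. unfold upd.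
  destruct (Nat.eqb k j) eqn:E1; destruct (Nat.eqb k i) eqn:E2; auto.
  apply Nat.eqb_eq in E1; apply Nat.eqb_eq in E2. subst. now contradiction H.
Qed.

Lemma derivable_pt_lim_upd p k j x :
  derivable_pt_lim (fun t => upd p k t j) x (if Nat.eqb j k then 1 else 0).
Proof.
  unfold upd. destruct (Nat.eqb j k).
  - apply derivable_pt_lim_id.
  - apply derivable_pt_lim_const.
Qed.

Lemma derivable_pt_lim_minus_eq f g x a b l :
  derivable_pt_lim f x a -> derivable_pt_lim g x b -> l = a - b ->
  derivable_pt_lim (fun t => f t - g t) x l.
Proof. intros. subst. now apply derivable_pt_lim_minus. Qed.

Lemma derivable_pt_lim_plus_eq f g x a b l :
  derivable_pt_lim f x a -> derivable_pt_lim g x b -> l = a + b ->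
  derivable_pt_lim (fun t => f t + g t) x l.
Proof. intros. subst. now apply derivable_pt_lim_plus. Qed.

Lemma derivable_pt_lim_mult_eq f g x a b l :
  derivable_pt_lim f x a -> derivable_pt_lim g x b -> l = a * g x + f x * b ->
  derivable_pt_lim (fun t => f t * g t) x l.
Proof. intros Hf Hg ->. exact (derivable_pt_lim_mult f g x a b Hf Hg). Qed.

Lemma derivable_zero_const h :
  (forall t, derivable_pt_lim h t 0) -> forall a b, h a = h b.
Proof.
  intros H a b. destruct (Rtotal_order a b) as [Hab|[Hab|Hab]].
  - destruct (MVT_cor2 h (fun _ => 0) a b Hab (fun c _ => H c)) as [c [Hc _]]. lra.
  - now subst.
  - destruct (MVT_cor2 h (fun _ => 0) b a Hab (fun c _ => H c)) as [c [Hc _]]. lra.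
Qed.

Section Smooth.
Variables (n : nat) (f : (nat -> R) -> R).
Hypothesis Hf : smooth_n n f.

Lemma smooth_n_pd i : (i < n)%nat -> smooth_n n (pd i f).
Proof.
  intros Hi l Hl.
  assert (E : iter_pd l (pd i f) = iter_pd (l ++ i :: nil) f).
  { clear Hl. induction l as [|j l IH]; simpl; now rewrite ?IH. }
  rewrite E. apply Hf.
  intros j Hj. apply in_app_or in Hj. destruct Hj as [Hj|[<-|[]]]; auto.
Qed.

Lemma smooth_n_derivable i p : (i < n)%nat ->
  derivable_pt_lim (fun t => f (upd p i t)) (p i) (pd i f p).
Proof.
  intro Hi. destruct (Hf nil) as [_ H]; [simpl; tauto|]. now apply H.
Qed.

Lemma smooth_n_derivable_at i p t0 : (i < n)%nat ->
  derivable_pt_lim (fun t => f (upd p i t)) t0 (pd i f (upd p i t0)).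
Proof.
  intro Hi. pose proof (smooth_n_derivable i (upd p i t0) Hi) as D.
  rewrite upd_same in D.
  replace (fun t => f (upd p i t)) with (fun t => f (upd (upd p i t0) i t)).
  - exact D.
  - apply functional_extensionality; intro t. now rewrite upd_upd.
Qed.

Lemma smooth_n_cont_pd2 i j : (i < n)%nat -> (j < n)%nat -> cont_n n (pd i (pd j f)).
Proof.
  intros Hi Hj. destruct (Hf (i :: j :: nil)) as [H _]; [|exact H].
  simpl; intros k [<-|[<-|[]]]; auto.
Qed.

End Smooth.

Lemma cont_n_slice2 n F p i j : cont_n n F -> (i < n)%nat -> (j < n)%nat -> i <> j ->
  continuity_2d_pt (fun s t => F (upd (upd p i s) j t)) (p i) (p j).
Proof.
  intros HC Hi Hj Hij eps.
  destruct (HC p eps (cond_pos eps)) as [d [Hd Hd2]].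
  exists (mkposreal d Hd). intros s t Hs Ht. simpl in Hs, Ht.
  rewrite !upd_id. apply Hd2. intros k Hk. unfold upd.
  destruct (Nat.eqb k j) eqn:E1; [apply Nat.eqb_eq in E1; now subst|].
  destruct (Nat.eqb k i) eqn:E2; [apply Nat.eqb_eq in E2; now subst|].
  now rewrite Rminus_eq_0, Rabs_R0.
Qed.

(* Schwarz's theorem, via Coquelicot's [Schwarz] on the two-variable slice through p. *)
Lemma pd_comm n f i j p : smooth_n n f -> (i < n)%nat -> (j < n)%nat ->
  pd i (pd j f) p = pd j (pd i f) p.
Proof.
  intros H Hi Hj. destruct (Nat.eq_dec i j) as [->|Hij]; auto.
  set (g := fun s t => f (upd (upd p i s) j t)).
  assert (Hji : forall s t, upd (upd p j t) i s = upd (upd p i s) j t)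
    by (intros; now rewrite upd_comm).
  assert (Hsj := smooth_n_pd n f H j Hj). assert (Hsi := smooth_n_pd n f H i Hi).
  assert (Dt : forall s t, is_derive (fun t => g s t) t (pd j f (upd (upd p i s) j t))).
  { intros s t. apply is_derive_Reals. exact (smooth_n_derivable_at n f H j _ t Hj). }
  assert (Ds : forall s t, is_derive (fun s => g s t) s (pd i f (upd (upd p i s) j t))).
  { intros s t. rewrite <- Hji.
    apply (is_derive_ext (fun s => f (upd (upd p j t) i s))); [intro; now rewrite Hji|].
    apply is_derive_Reals. exact (smooth_n_derivable_at n f H i _ s Hi). }
  assert (Et : forall s t, Derive (fun t => g s t) t = pd j f (upd (upd p i s) j t))
    by (intros; now apply is_derive_unique).
  assert (Es : forall s t, Derive (fun s => g s t) s = pd i f (upd (upd p i s) j t))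
    by (intros; now apply is_derive_unique).
  assert (Dst : forall s t, is_derive (fun s => Derive (fun t => g s t) t) s
                               (pd i (pd j f) (upd (upd p i s) j t))).
  { intros s t. rewrite <- Hji.
    apply (is_derive_ext (fun s => pd j f (upd (upd p j t) i s))); [intro; now rewrite Et, Hji|].
    apply is_derive_Reals. exact (smooth_n_derivable_at n _ Hsj i _ s Hi). }
  assert (Dts : forall s t, is_derive (fun t => Derive (fun s => g s t) s) t
                               (pd j (pd i f) (upd (upd p i s) j t))).
  { intros s t.
    apply (is_derive_ext (fun t => pd i f (upd (upd p i s) j t))); [intro; now rewrite Es|].
    apply is_derive_Reals. exact (smooth_n_derivable_at n _ Hsi j _ t Hj). }
  pose proof (Schwarz g (p i) (p j)) as S.
  rewrite (is_derive_unique _ _ _ (Dst _ _)), (is_derive_unique _ _ _ (Dts _ _)), !upd_id in S.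
  apply S.
  - exists (mkposreal 1 Rlt_0_1). intros s t _ _.
    repeat split; eexists; [apply Ds|apply Dt|apply Dst|apply Dts].
  - replace (fun s t => Derive (fun s => Derive (fun t => g s t) t) s)
      with (fun s t => pd i (pd j f) (upd (upd p i s) j t))
      by (do 2 (apply functional_extensionality; intro); symmetry; now apply is_derive_unique).
    apply (cont_n_slice2 n); auto. now apply smooth_n_cont_pd2.
  - replace (fun s t => Derive (fun t => Derive (fun s => g s t) s) t)
      with (fun s t => pd j (pd i f) (upd (upd p i s) j t))
      by (do 2 (apply functional_extensionality; intro); symmetry; now apply is_derive_unique).
    apply (cont_n_slice2 n); auto. now apply smooth_n_cont_pd2.
Qed.

Lemma upd_pt6 k x y z u v w t : (k < 6)%nat -> exists x' y' z' u' v' w',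
  upd (pt6 x y z u v w) k t = pt6 x' y' z' u' v' w'.
Proof.
  intro Hk. destruct k as [|[|[|[|[|[|k]]]]]]; try lia;
  [exists t, y, z, u, v, w|exists x, t, z, u, v, w|exists x, y, t, u, v, w
  |exists x, y, z, t, v, w|exists x, y, z, u, t, w|exists x, y, z, u, v, t];
  apply functional_extensionality; intros [|[|[|[|[|[|j]]]]]]; reflexivity.
Qed.

Ltac ext6 := apply functional_extensionality; intros [|[|[|[|[|[|?]]]]]]; reflexivity.
Lemma upd_pt6_0 x y z u v w t : upd (pt6 x y z u v w) 0 t = pt6 t y z u v w. Proof. ext6. Qed.
Lemma upd_pt6_1 x y z u v w t : upd (pt6 x y z u v w) 1 t = pt6 x t z u v w. Proof. ext6. Qed.
Lemma upd_pt6_2 x y z u v w t : upd (pt6 x y z u v w) 2 t = pt6 x y t u v w. Proof. ext6. Qed.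
Lemma upd_pt6_3 x y z u v w t : upd (pt6 x y z u v w) 3 t = pt6 x y z t v w. Proof. ext6. Qed.
Lemma upd_pt6_4 x y z u v w t : upd (pt6 x y z u v w) 4 t = pt6 x y z u t w. Proof. ext6. Qed.
Lemma upd_pt6_5 x y z u v w t : upd (pt6 x y z u v w) 5 t = pt6 x y z u v t. Proof. ext6. Qed.

Lemma pd_pt6_ext f g : (forall x y z u v w, f (pt6 x y z u v w) = g (pt6 x y z u v w)) ->
  forall k, (k < 6)%nat ->
  forall x y z u v w, pd k f (pt6 x y z u v w) = pd k g (pt6 x y z u v w).
Proof.
  intros H k Hk x y z u v w. unfold pd. f_equal. apply functional_extensionality; intro t.
  destruct (upd_pt6 k x y z u v w t Hk) as (x'&y'&z'&u'&v'&w'&->). apply H.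
Qed.

Definition pd_zero6 (F : (nat -> R) -> R) (k : nat) : Prop :=
  forall x y z u v w,
    derivable_pt_lim (fun t => F (upd (pt6 x y z u v w) k t)) (pt6 x y z u v w k) 0.

Lemma pd_zero6_of_pd F k : smooth_n 6 F -> (k < 6)%nat ->
  (forall x y z u v w, pd k F (pt6 x y z u v w) = 0) -> pd_zero6 F k.
Proof.
  intros Hs Hk H0 x y z u v w. rewrite <- (H0 x y z u v w). now apply (smooth_n_derivable 6).
Qed.

Lemma pd_zero6_upd F k : (k < 6)%nat -> pd_zero6 F k ->
  forall x y z u v w t, F (upd (pt6 x y z u v w) k t) = F (pt6 x y z u v w).
Proof.
  intros Hk H x y z u v w t. set (P := pt6 x y z u v w).
  assert (D : forall t0, derivable_pt_lim (fun t => F (upd P k t)) t0 0).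
  { intro t0. destruct (upd_pt6 k x y z u v w t0 Hk) as (x'&y'&z'&u'&v'&w'&E).
    pose proof (H x' y' z' u' v' w') as D. rewrite <- E, upd_same in D.
    replace (fun t => F (upd P k t)) with (fun t => F (upd (upd P k t0) k t)); [exact D|].
    apply functional_extensionality; intro. now rewrite upd_upd. }
  rewrite (derivable_zero_const _ D t (P k)). now rewrite upd_id.
Qed.

Lemma pd_zero6_const F : (forall k, (k < 6)%nat -> pd_zero6 F k) ->
  forall x y z u v w, F (pt6 x y z u v w) = F (pt6 0 0 0 0 0 0).
Proof.
  intros H x y z u v w.
  rewrite <- (pd_zero6_upd F 0 ltac:(lia) (H 0%nat ltac:(lia)) x y z u v w 0), upd_pt6_0.
  rewrite <- (pd_zero6_upd F 1 ltac:(lia) (H 1%nat ltac:(lia)) 0 y z u v w 0), upd_pt6_1.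
  rewrite <- (pd_zero6_upd F 2 ltac:(lia) (H 2%nat ltac:(lia)) 0 0 z u v w 0), upd_pt6_2.
  rewrite <- (pd_zero6_upd F 3 ltac:(lia) (H 3%nat ltac:(lia)) 0 0 0 u v w 0), upd_pt6_3.
  rewrite <- (pd_zero6_upd F 4 ltac:(lia) (H 4%nat ltac:(lia)) 0 0 0 0 v w 0), upd_pt6_4.
  rewrite <- (pd_zero6_upd F 5 ltac:(lia) (H 5%nat ltac:(lia)) 0 0 0 0 0 w 0), upd_pt6_5.
  reflexivity.
Qed.

Lemma pd_zero6_fibre_const F : pd_zero6 F 3 -> pd_zero6 F 4 -> pd_zero6 F 5 ->
  forall x y z u v w, F (pt6 x y z u v w) = F (pt6 x y z 0 0 0).
Proof.
  intros H3 H4 H5 x y z u v w.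
  rewrite <- (pd_zero6_upd F 3 ltac:(lia) H3 x y z u v w 0), upd_pt6_3.
  rewrite <- (pd_zero6_upd F 4 ltac:(lia) H4 x y z 0 v w 0), upd_pt6_4.
  rewrite <- (pd_zero6_upd F 5 ltac:(lia) H5 x y z 0 0 w 0), upd_pt6_5.
  reflexivity.
Qed.

Lemma pd_fibre_const F : (forall x y z u v w, F (pt6 x y z u v w) = F (pt6 x y z 0 0 0)) ->
  forall j, (j < 3)%nat ->
  forall x y z u v w, pd j F (pt6 x y z u v w) = pd j F (pt6 x y z 0 0 0).
Proof.
  intros H j Hj x y z u v w. unfold pd.
  destruct j as [|[|[|j]]]; try lia; simpl pt6 at 2 4; f_equal;
    apply functional_extensionality; intro t.
  - rewrite !upd_pt6_0, H. symmetry. apply H.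
  - rewrite !upd_pt6_1, H. symmetry. apply H.
  - rewrite !upd_pt6_2, H. symmetry. apply H.
Qed.

Lemma pt6_eq_of_pd F T : smooth_n 6 F ->
  (forall d, (d < 6)%nat -> forall x y z u v w,
     derivable_pt_lim (fun t => T (upd (pt6 x y z u v w) d t)) (pt6 x y z u v w d)
                      (pd d F (pt6 x y z u v w))) ->
  forall x y z u v w,
    F (pt6 x y z u v w) = T (pt6 x y z u v w) + (F (pt6 0 0 0 0 0 0) - T (pt6 0 0 0 0 0 0)).
Proof.
  intros Hs HT x y z u v w.
  enough (E : F (pt6 x y z u v w) - T (pt6 x y z u v w)
              = F (pt6 0 0 0 0 0 0) - T (pt6 0 0 0 0 0 0)) by lra.
  apply (pd_zero6_const (fun p => F p - T p)). intros d Hd x' y' z' u' v' w'.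
  eapply derivable_pt_lim_minus_eq;
    [apply (smooth_n_derivable 6 F Hs d _ Hd)|now apply HT|ring].
Qed.

Lemma pd_opp n f k p : smooth_n n f -> (k < n)%nat -> pd k (fun p => - f p) p = - pd k f p.
Proof.
  intros Hs Hk. apply pd_of_derivable, derivable_pt_lim_opp.
  exact (smooth_n_derivable n f Hs k p Hk).
Qed.

Lemma fibre_const_of_pd F : smooth_n 6 F ->
  (forall d, (3 <= d < 6)%nat -> forall x y z u v w, pd d F (pt6 x y z u v w) = 0) ->
  forall x y z u v w, F (pt6 x y z u v w) = F (pt6 x y z 0 0 0).
Proof.
  intros Hs H0. apply pd_zero6_fibre_const; apply pd_zero6_of_pd; auto; apply H0; lia.
Qed.

(* A symmetric jet whose trace is s; for s = u^2 + v^2 + w^2 - q it lies on the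
   solution set, and its five free entries can be chosen at will. *)
Definition sym_jet (s k11 k22 k01 k02 k12 : R) : nat -> nat -> R := fun a b =>
  match a, b with
  | O, O => s - k11 - k22 | S O, S O => k11 | S (S O), S (S O) => k22
  | O, S O | S O, O => k01 | O, S (S O) | S (S O), O => k02
  | _, _ => k12 end.

Section DeterminingEquations.
Variables (q : F3) (xi eta tau phi psi zeta : F6).
Hypothesis H : is_symmetry_generator q xi eta tau phi psi zeta.
Variables (x y z u v w : R).

Ltac criterion_at a b c d e :=
  let C := fresh "C" in
  pose proof (H x y z u v w (sym_jet (u^2+v^2+w^2 - q x y z) a b c d e)
    ltac:(unfold Eq1, sym_jet; ring) ltac:(unfold Eq2, sym_jet; ring)
    ltac:(unfold Eq3, sym_jet; ring) ltac:(unfold Eq4, sym_jet; ring)) as C;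
  cbv beta iota zeta delta [prol1 TD sel3 sym_jet] in C; decompose [and] C; clear C.

Lemma symmetry_base_fibre_indep :
  D6 3 xi x y z u v w = 0 /\ D6 4 xi x y z u v w = 0 /\ D6 5 xi x y z u v w = 0 /\
  D6 3 eta x y z u v w = 0 /\ D6 4 eta x y z u v w = 0 /\ D6 5 eta x y z u v w = 0 /\
  D6 3 tau x y z u v w = 0 /\ D6 4 tau x y z u v w = 0 /\ D6 5 tau x y z u v w = 0.
Proof.
  criterion_at 0 0 0 0 0.
  criterion_at (-1) 0 0 0 0. criterion_at 1 0 0 0 0.
  criterion_at 0 (-1) 0 0 0. criterion_at 0 1 0 0 0.
  criterion_at 1 (-1) 0 0 0. criterion_at (-1) 1 0 0 0.
  criterion_at 0 0 1 1 0. criterion_at 0 0 (-1) (-1) 0.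
  criterion_at 0 0 1 0 1. criterion_at 0 0 (-1) 0 (-1).
  criterion_at 0 0 0 1 1. criterion_at 0 0 0 (-1) (-1).
  repeat split; lra.
Qed.

Lemma symmetry_conformal :
  D6 1 xi x y z u v w + D6 0 eta x y z u v w = 0 /\
  D6 2 xi x y z u v w + D6 0 tau x y z u v w = 0 /\
  D6 2 eta x y z u v w + D6 1 tau x y z u v w = 0 /\
  D6 0 xi x y z u v w = D6 1 eta x y z u v w /\
  D6 0 xi x y z u v w = D6 2 tau x y z u v w /\
  D6 4 phi x y z u v w = - D6 0 eta x y z u v w /\
  D6 5 phi x y z u v w = - D6 0 tau x y z u v w /\
  D6 3 psi x y z u v w = - D6 1 xi x y z u v w /\
  D6 5 psi x y z u v w = - D6 1 tau x y z u v w /\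
  D6 3 zeta x y z u v w = - D6 2 xi x y z u v w /\
  D6 4 zeta x y z u v w = - D6 2 eta x y z u v w /\
  D6 3 phi x y z u v w = D6 4 psi x y z u v w /\
  D6 3 phi x y z u v w = D6 5 zeta x y z u v w.
Proof.
  destruct symmetry_base_fibre_indep as (b1&b2&b3&b4&b5&b6&b7&b8&b9).
  criterion_at 0 0 0 0 0.
  criterion_at (-1) 0 0 0 0. criterion_at 1 0 0 0 0.
  criterion_at 0 (-1) 0 0 0. criterion_at 0 1 0 0 0.
  criterion_at 1 (-1) 0 0 0. criterion_at (-1) 1 0 0 0.
  criterion_at 1 (-2) 0 0 0. criterion_at (-1) 2 0 0 0.
  criterion_at (-2) 1 0 0 0. criterion_at 2 (-1) 0 0 0.
  criterion_at 1 1 0 0 0. criterion_at (-1) (-1) 0 0 0.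
  criterion_at 0 0 1 0 0. criterion_at 0 0 (-1) 0 0.
  criterion_at 0 0 0 1 0. criterion_at 0 0 0 (-1) 0.
  criterion_at 0 0 0 0 1. criterion_at 0 0 0 0 (-1).
  rewrite b1, b2, b3, b4, b5, b6, b7, b8, b9 in *.
  repeat split; lra.
Qed.

Lemma symmetry_residual :
  - (xi x y z u v w * D3 0 q x y z + eta x y z u v w * D3 1 q x y z
     + tau x y z u v w * D3 2 q x y z)
  + 2 * u * phi x y z u v w + 2 * v * psi x y z u v w + 2 * w * zeta x y z u v w
  - (D6 0 phi x y z u v w + D6 1 psi x y z u v w + D6 2 zeta x y z u v w)
  - (u^2+v^2+w^2 - q x y z) * (D6 3 phi x y z u v w - D6 0 xi x y z u v w) = 0.
Proof.
  destruct symmetry_base_fibre_indep as (b1&b2&b3&b4&b5&b6&b7&b8&b9).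
  criterion_at 0 0 0 0 0. rewrite b1, b2, b3, b4, b5, b6, b7, b8, b9 in *. lra.
Qed.

End DeterminingEquations.

Definition moeb_xi (a1 a2 a3 a4 a5 a6 a7 a8 a9 a10 : R) : F6 := fun x y z u v w =>
  a1 * (x ^ 2 - y ^ 2 - z ^ 2) + 2 * a2 * x * y + 2 * a3 * x * z - a4 * z + a5 * x
  - a6 * y + a9.
Definition moeb_eta (a1 a2 a3 a4 a5 a6 a7 a8 a9 a10 : R) : F6 := fun x y z u v w =>
  2 * a1 * x * y + a2 * (y ^ 2 - x ^ 2 - z ^ 2) + 2 * a3 * y * z + a5 * y + a6 * x
  - a7 * z + a10.
Definition moeb_tau (a1 a2 a3 a4 a5 a6 a7 a8 a9 a10 : R) : F6 := fun x y z u v w =>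
  2 * a1 * x * z + 2 * a2 * y * z + a3 * (z ^ 2 - x ^ 2 - y ^ 2) + a4 * x + a5 * z
  + a7 * y + a8.
Definition moeb_phi (a1 a2 a3 a4 a5 a6 a7 a8 a9 a10 : R) : F6 := fun x y z u v w =>
  a1 * (1 - 2 * (x * u + y * v + z * w)) + 2 * a2 * (x * v - y * u)
  + 2 * a3 * (x * w - z * u) - a4 * w - a5 * u - a6 * v.
Definition moeb_psi (a1 a2 a3 a4 a5 a6 a7 a8 a9 a10 : R) : F6 := fun x y z u v w =>
  2 * a1 * (y * u - x * v) + a2 * (1 - 2 * (x * u + y * v + z * w))
  - 2 * a3 * (z * v - y * w) - a5 * v + a6 * u - a7 * w.
Definition moeb_zeta (a1 a2 a3 a4 a5 a6 a7 a8 a9 a10 : R) : F6 := fun x y z u v w =>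
  2 * a1 * (z * u - x * w) + 2 * a2 * (z * v - y * w)
  + a3 * (1 - 2 * (x * u + y * v + z * w)) + a4 * u - a5 * w + a7 * v.

Definition moebius_generator (a1 a2 a3 a4 a5 a6 a7 a8 a9 a10 : R)
    (xi eta tau phi psi zeta : F6) : Prop :=
  forall x y z u v w : R,
    xi x y z u v w = moeb_xi a1 a2 a3 a4 a5 a6 a7 a8 a9 a10 x y z u v w
    /\ eta x y z u v w = moeb_eta a1 a2 a3 a4 a5 a6 a7 a8 a9 a10 x y z u v w
    /\ tau x y z u v w = moeb_tau a1 a2 a3 a4 a5 a6 a7 a8 a9 a10 x y z u v w
    /\ phi x y z u v w = moeb_phi a1 a2 a3 a4 a5 a6 a7 a8 a9 a10 x y z u v w
    /\ psi x y z u v w = moeb_psi a1 a2 a3 a4 a5 a6 a7 a8 a9 a10 x y z u v w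
    /\ zeta x y z u v w = moeb_zeta a1 a2 a3 a4 a5 a6 a7 a8 a9 a10 x y z u v w.

Definition potential_condition (a1 a2 a3 a4 a5 a6 a7 a8 a9 a10 : R) (q : F3) : Prop :=
  forall x y z : R,
    (a1 * (y ^ 2 + z ^ 2 - x ^ 2) - 2 * a2 * x * y - 2 * a3 * x * z
       + a4 * z - a5 * x + a6 * y - a9) * D3 0 q x y z
    + (- 2 * a1 * x * y + a2 * (x ^ 2 + z ^ 2 - y ^ 2) - 2 * a3 * y * z
       - a5 * y - a6 * x + a7 * z - a10) * D3 1 q x y z
    + (- 2 * a1 * x * z - 2 * a2 * y * z + a3 * (x ^ 2 + y ^ 2 - z ^ 2)
       - a4 * x - a5 * z - a7 * y - a8) * D3 2 q x y z
    - 2 * (a5 + 2 * (a1 * x + a2 * y + a3 * z)) * q x y z = 0.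

Section Moebius.
Variables a1 a2 a3 a4 a5 a6 a7 a8 a9 a10 : R.
Local Notation mxi := (moeb_xi a1 a2 a3 a4 a5 a6 a7 a8 a9 a10).
Local Notation meta := (moeb_eta a1 a2 a3 a4 a5 a6 a7 a8 a9 a10).
Local Notation mtau := (moeb_tau a1 a2 a3 a4 a5 a6 a7 a8 a9 a10).
Local Notation mphi := (moeb_phi a1 a2 a3 a4 a5 a6 a7 a8 a9 a10).
Local Notation mpsi := (moeb_psi a1 a2 a3 a4 a5 a6 a7 a8 a9 a10).
Local Notation mzeta := (moeb_zeta a1 a2 a3 a4 a5 a6 a7 a8 a9 a10).

Lemma D6_of_derivable k F x y z u v w l :
  derivable_pt_lim (fun t => unc6 F (upd (pt6 x y z u v w) k t)) (pt6 x y z u v w k) l ->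
  D6 k F x y z u v w = l.
Proof. apply pd_of_derivable. Qed.

Ltac compute_D6 :=
  match goal with |- context [D6 ?k ?F ?x ?y ?z ?u ?v ?w] =>
    erewrite (D6_of_derivable k F x y z u v w) by
      (cbv beta iota delta [unc6 upd pt6 Nat.eqb moeb_xi moeb_eta moeb_tau
                            moeb_phi moeb_psi moeb_zeta]; apply is_derive_Reals;
       auto_derive; [exact I|reflexivity])
  end.

Lemma moebius_is_symmetry q : potential_condition a1 a2 a3 a4 a5 a6 a7 a8 a9 a10 q ->
  is_symmetry_generator q mxi meta mtau mphi mpsi mzeta.
Proof.
  intros Hq x y z u v w J H1 H2 H3 H4.
  cbv beta iota zeta delta [prol1 TD sel3].
  repeat compute_D6.
  unfold Eq1, Eq2, Eq3, Eq4 in *.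
  assert (J21 : J 2%nat 1%nat = J 1%nat 2%nat) by lra.
  assert (J20 : J 2%nat 0%nat = J 0%nat 2%nat) by lra.
  assert (J10 : J 1%nat 0%nat = J 0%nat 1%nat) by lra.
  assert (Hqxyz : q x y z
                  = u ^ 2 + v ^ 2 + w ^ 2 - (J 0%nat 0%nat + J 1%nat 1%nat + J 2%nat 2%nat))
    by lra.
  pose proof (Hq x y z) as Hq1. rewrite Hqxyz in Hq1. rewrite J21, J20, J10.
  unfold moeb_xi, moeb_eta, moeb_tau, moeb_phi, moeb_psi, moeb_zeta.
  repeat split; try ring. lra.
Qed.

Lemma symmetry_of_moebius_generator q xi eta tau phi psi zeta :
  moebius_generator a1 a2 a3 a4 a5 a6 a7 a8 a9 a10 xi eta tau phi psi zeta ->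
  potential_condition a1 a2 a3 a4 a5 a6 a7 a8 a9 a10 q ->
  is_symmetry_generator q xi eta tau phi psi zeta.
Proof.
  intros HF Hq.
  replace xi with mxi by (do 6 (apply functional_extensionality; intro); symmetry; apply HF).
  replace eta with meta by (do 6 (apply functional_extensionality; intro); symmetry; apply HF).
  replace tau with mtau by (do 6 (apply functional_extensionality; intro); symmetry; apply HF).
  replace phi with mphi by (do 6 (apply functional_extensionality; intro); symmetry; apply HF).
  replace psi with mpsi by (do 6 (apply functional_extensionality; intro); symmetry; apply HF).
  replace zeta with mzeta by (do 6 (apply functional_extensionality; intro); symmetry; apply HF).
  now apply moebius_is_symmetry.
Qed.

End Moebius.

Section Forward.
Variables (q : F3) (xi eta tau phi psi zeta : F6).
Hypotheses (Hxi : smooth6 xi) (Heta : smooth6 eta) (Htau : smooth6 tau)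
  (Hphi : smooth6 phi) (Hpsi : smooth6 psi) (Hzeta : smooth6 zeta).
Hypothesis H : is_symmetry_generator q xi eta tau phi psi zeta.

Definition X j := unc6 (sel3 xi eta tau j).
Definition Y k := unc6 (sel3 phi psi zeta k).
(* nu is the conformal factor of (xi, eta, tau) and mu the common slope
   d phi/du = d psi/dv = d zeta/dw. *)
Definition nu := pd 0 (X 0).
Definition mu := pd 3 (Y 0).

Lemma smooth_X j : smooth_n 6 (X j).
Proof. destruct j as [|[|j]]; [exact Hxi|exact Heta|exact Htau]. Qed.
Lemma smooth_Y k : smooth_n 6 (Y k).
Proof. destruct k as [|[|k]]; [exact Hphi|exact Hpsi|exact Hzeta]. Qed.
Lemma smooth_pd_X j d : (d < 6)%nat -> smooth_n 6 (pd d (X j)).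
Proof. intro. apply smooth_n_pd; auto. apply smooth_X. Qed.
Lemma smooth_pd_Y k d : (d < 6)%nat -> smooth_n 6 (pd d (Y k)).
Proof. intro. apply smooth_n_pd; auto. apply smooth_Y. Qed.
Lemma smooth_nu : smooth_n 6 nu.
Proof. apply smooth_pd_X; lia. Qed.
Lemma smooth_pd_nu d : (d < 6)%nat -> smooth_n 6 (pd d nu).
Proof. intro. apply smooth_n_pd; auto. apply smooth_nu. Qed.

Ltac to_D6 :=
  unfold mu, nu, X, Y; cbv [sel3 Nat.add];
  repeat match goal with |- context [pd ?k (unc6 ?F) (pt6 ?x ?y ?z ?u ?v ?w)] =>
    change (pd k (unc6 F) (pt6 x y z u v w)) with (D6 k F x y z u v w) end.

Ltac use_base_fibre_indep x y z u v w :=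
  destruct (symmetry_base_fibre_indep q xi eta tau phi psi zeta H x y z u v w)
    as (?&?&?&?&?&?&?&?&?).
Ltac use_conformal x y z u v w :=
  destruct (symmetry_conformal q xi eta tau phi psi zeta H x y z u v w)
    as (?&?&?&?&?&?&?&?&?&?&?&?&?).

Lemma pd_fibre_X j d : (j < 3)%nat -> (3 <= d < 6)%nat ->
  forall x y z u v w, pd d (X j) (pt6 x y z u v w) = 0.
Proof.
  intros Hj Hd x y z u v w. use_base_fibre_indep x y z u v w.
  destruct j as [|[|[|j]]]; try lia; destruct d as [|[|[|[|[|[|d]]]]]]; try lia; to_D6; auto.
Qed.

Lemma pd_X_skew i j : (i < 3)%nat -> (j < 3)%nat -> i <> j -> forall x y z u v w,
  pd i (X j) (pt6 x y z u v w) = - pd j (X i) (pt6 x y z u v w).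
Proof.
  intros Hi Hj Hij x y z u v w. use_conformal x y z u v w.
  destruct i as [|[|[|i]]]; try lia; destruct j as [|[|[|j]]]; try lia; to_D6; lra.
Qed.

Lemma pd_X_diag i : (i < 3)%nat -> forall x y z u v w,
  pd i (X i) (pt6 x y z u v w) = nu (pt6 x y z u v w).
Proof.
  intros Hi x y z u v w. use_conformal x y z u v w.
  destruct i as [|[|[|i]]]; try lia; to_D6; lra.
Qed.

Lemma pd_fibre_Y k l : (k < 3)%nat -> (l < 3)%nat -> k <> l -> forall x y z u v w,
  pd (3 + l) (Y k) (pt6 x y z u v w) = - pd k (X l) (pt6 x y z u v w).
Proof.
  intros Hk Hl Hkl x y z u v w. use_conformal x y z u v w.
  destruct k as [|[|[|k]]]; try lia; destruct l as [|[|[|l]]]; try lia; to_D6; lra.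
Qed.

Lemma pd_fibre_Y_diag k : (k < 3)%nat -> forall x y z u v w,
  pd (3 + k) (Y k) (pt6 x y z u v w) = mu (pt6 x y z u v w).
Proof.
  intros Hk x y z u v w. use_conformal x y z u v w.
  destruct k as [|[|[|k]]]; try lia; to_D6; lra.
Qed.

Lemma residual_eq x y z u v w :
  - (X 0 (pt6 x y z u v w) * D3 0 q x y z + X 1 (pt6 x y z u v w) * D3 1 q x y z
     + X 2 (pt6 x y z u v w) * D3 2 q x y z)
  + 2 * u * Y 0 (pt6 x y z u v w) + 2 * v * Y 1 (pt6 x y z u v w)
  + 2 * w * Y 2 (pt6 x y z u v w)
  - (pd 0 (Y 0) (pt6 x y z u v w) + pd 1 (Y 1) (pt6 x y z u v w)
     + pd 2 (Y 2) (pt6 x y z u v w))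
  - (u^2+v^2+w^2 - q x y z) * (mu (pt6 x y z u v w) - nu (pt6 x y z u v w)) = 0.
Proof.
  pose proof (symmetry_residual q xi eta tau phi psi zeta H x y z u v w) as E.
  to_D6. exact E.
Qed.

Lemma pd2_X_repeated i j : (i < 3)%nat -> (j < 3)%nat -> i <> j -> forall x y z u v w,
  pd j (pd j (X i)) (pt6 x y z u v w) = - pd i nu (pt6 x y z u v w).
Proof.
  intros Hi Hj Hij x y z u v w.
  rewrite (pd_pt6_ext _ (fun p => - pd i (X j) p) (pd_X_skew j i Hj Hi (not_eq_sym Hij)) j)
    by lia.
  rewrite (pd_opp 6) by (try apply smooth_pd_X; lia).
  rewrite (pd_comm 6 (X j) j i) by (try apply smooth_X; lia).
  now rewrite (pd_pt6_ext _ nu (pd_X_diag j Hj) i) by lia.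
Qed.

(* Three applications of the skew-symmetry, with Schwarz in between, flip the sign. *)
Lemma pd2_X_distinct i j k : (i < 3)%nat -> (j < 3)%nat -> (k < 3)%nat ->
  i <> j -> j <> k -> i <> k ->
  forall x y z u v w, pd k (pd j (X i)) (pt6 x y z u v w) = 0.
Proof.
  intros Hi Hj Hk Hij Hjk Hik x y z u v w.
  enough (E : pd k (pd j (X i)) (pt6 x y z u v w) = - pd k (pd j (X i)) (pt6 x y z u v w))
    by lra.
  rewrite (pd_pt6_ext _ (fun p => - pd i (X j) p) (pd_X_skew j i Hj Hi (not_eq_sym Hij)) k)
    at 1 by lia.
  rewrite (pd_opp 6) by (try apply smooth_pd_X; lia).
  rewrite (pd_comm 6 (X j) k i) by (try apply smooth_X; lia).
  rewrite (pd_pt6_ext _ (fun p => - pd j (X k) p) (pd_X_skew k j Hk Hj (not_eq_sym Hjk)) i)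
    by lia.
  rewrite (pd_opp 6) by (try apply smooth_pd_X; lia).
  rewrite (pd_comm 6 (X k) i j) by (try apply smooth_X; lia).
  rewrite (pd_pt6_ext _ (fun p => - pd k (X i) p) (pd_X_skew i k Hi Hk Hik) j) by lia.
  rewrite (pd_opp 6) by (try apply smooth_pd_X; lia).
  rewrite (pd_comm 6 (X i) j k) by (try apply smooth_X; lia). ring.
Qed.

Lemma pd_pd_X_diag i d : (i < 3)%nat -> (d < 6)%nat -> forall x y z u v w,
  pd d (pd i (X i)) (pt6 x y z u v w) = pd d nu (pt6 x y z u v w).
Proof. intros Hi Hd. exact (pd_pt6_ext _ _ (pd_X_diag i Hi) d Hd). Qed.

Lemma pd_fibre_pd_X i j d : (i < 3)%nat -> (j < 6)%nat -> (3 <= d < 6)%nat ->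
  forall x y z u v w, pd d (pd j (X i)) (pt6 x y z u v w) = 0.
Proof.
  intros Hi Hj Hd x y z u v w.
  rewrite (pd_comm 6 (X i) d j) by (try apply smooth_X; lia).
  rewrite (pd_pt6_ext _ (fun _ => 0) (pd_fibre_X i d Hi Hd) j Hj). apply pd_const.
Qed.

Lemma pd2_nu_mixed i k : (i < 3)%nat -> (k < 3)%nat -> i <> k -> forall x y z u v w,
  pd k (pd i nu) (pt6 x y z u v w) = 0.
Proof.
  intros Hi Hk Hik x y z u v w. set (j := (3 - i - k)%nat).
  assert (Hj : (j < 3)%nat) by (unfold j; lia).
  assert (Hij : i <> j) by (unfold j; lia). assert (Hkj : k <> j) by (unfold j; lia).
  pose proof (pd_pt6_ext _ (fun p => - pd i nu p) (pd2_X_repeated i j Hi Hj Hij) k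
                ltac:(lia) x y z u v w) as E.
  rewrite (pd_opp 6) in E by (try apply smooth_pd_nu; lia).
  rewrite (pd_comm 6 (pd j (X i)) k j) in E by (try apply smooth_pd_X; lia).
  rewrite (pd_pt6_ext _ (fun _ => 0)
             (pd2_X_distinct i j k Hi Hj Hk Hij (not_eq_sym Hkj) Hik) j) in E by lia.
  rewrite pd_const in E. lra.
Qed.

Lemma pd2_nu_diag_skew i j : (i < 3)%nat -> (j < 3)%nat -> i <> j -> forall x y z u v w,
  pd i (pd i nu) (pt6 x y z u v w) = - pd j (pd j nu) (pt6 x y z u v w).
Proof.
  intros Hi Hj Hij x y z u v w.
  pose proof (pd_pt6_ext _ (fun p => - pd i nu p) (pd2_X_repeated i j Hi Hj Hij) i
                ltac:(lia) x y z u v w) as E.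
  rewrite (pd_opp 6) in E by (try apply smooth_pd_nu; lia).
  rewrite (pd_comm 6 (pd j (X i)) i j) in E by (try apply smooth_pd_X; lia).
  assert (E2 : forall x y z u v w,
             pd i (pd j (X i)) (pt6 x y z u v w) = pd j nu (pt6 x y z u v w)).
  { intros. rewrite (pd_comm 6 (X i) i j) by (try apply smooth_X; lia).
    apply pd_pd_X_diag; lia. }
  rewrite (pd_pt6_ext _ _ E2 j) in E by lia. lra.
Qed.

Lemma pd2_nu_diag i : (i < 3)%nat -> forall x y z u v w,
  pd i (pd i nu) (pt6 x y z u v w) = 0.
Proof.
  intros Hi x y z u v w.
  pose proof (pd2_nu_diag_skew 0 1 ltac:(lia) ltac:(lia) ltac:(lia) x y z u v w).
  pose proof (pd2_nu_diag_skew 0 2 ltac:(lia) ltac:(lia) ltac:(lia) x y z u v w).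
  pose proof (pd2_nu_diag_skew 1 2 ltac:(lia) ltac:(lia) ltac:(lia) x y z u v w).
  destruct i as [|[|[|i]]]; try lia; lra.
Qed.

Lemma pd_fibre_nu d : (3 <= d < 6)%nat -> forall x y z u v w,
  pd d nu (pt6 x y z u v w) = 0.
Proof. intros Hd x y z u v w. apply pd_fibre_pd_X; lia. Qed.

Lemma pd_fibre_pd_nu i d : (i < 3)%nat -> (3 <= d < 6)%nat -> forall x y z u v w,
  pd d (pd i nu) (pt6 x y z u v w) = 0.
Proof.
  intros Hi Hd x y z u v w.
  rewrite (pd_comm 6 nu d i) by (try apply smooth_nu; lia).
  rewrite (pd_pt6_ext _ (fun _ => 0) (pd_fibre_nu d Hd) i) by lia. apply pd_const.
Qed.

Definition grad_nu k := pd k nu (pt6 0 0 0 0 0 0).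

Lemma pd_nu_const k : (k < 3)%nat -> forall x y z u v w,
  pd k nu (pt6 x y z u v w) = grad_nu k.
Proof.
  intros Hk x y z u v w. apply pd_zero6_const. intros d Hd.
  apply pd_zero6_of_pd; auto; [apply smooth_pd_nu; lia|]. intros.
  destruct (Compare_dec.lt_dec d 3).
  - destruct (Nat.eq_dec d k) as [->|]; [now apply pd2_nu_diag|now apply pd2_nu_mixed].
  - apply pd_fibre_pd_nu; lia.
Qed.

Lemma pd2_X i j k : (i < 3)%nat -> (j < 3)%nat -> (k < 3)%nat -> forall x y z u v w,
  pd k (pd j (X i)) (pt6 x y z u v w) =
  (if Nat.eqb i j then grad_nu k else 0) + (if Nat.eqb i k then grad_nu j else 0)
  - (if Nat.eqb j k then grad_nu i else 0).
Proof.
  intros Hi Hj Hk x y z u v w.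
  destruct (Nat.eq_dec i j) as [<-|Hij].
  - rewrite Nat.eqb_refl, pd_pd_X_diag, pd_nu_const by lia. destruct (Nat.eqb i k); ring.
  - rewrite (proj2 (Nat.eqb_neq _ _) Hij).
    destruct (Nat.eq_dec i k) as [<-|Hik].
    + rewrite Nat.eqb_refl, (proj2 (Nat.eqb_neq _ _) (not_eq_sym Hij)).
      rewrite (pd_comm 6 (X i) i j) by (try apply smooth_X; lia).
      rewrite pd_pd_X_diag, pd_nu_const by lia. ring.
    + rewrite (proj2 (Nat.eqb_neq _ _) Hik).
      destruct (Nat.eq_dec j k) as [<-|Hjk].
      * rewrite Nat.eqb_refl, pd2_X_repeated, pd_nu_const by lia. ring.
      * rewrite (proj2 (Nat.eqb_neq _ _) Hjk), pd2_X_distinct by lia. ring.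
Qed.

Definition coef1 := grad_nu 0 / 2.
Definition coef2 := grad_nu 1 / 2.
Definition coef3 := grad_nu 2 / 2.
Definition coef4 := pd 0 (X 2) (pt6 0 0 0 0 0 0).
Definition coef5 := nu (pt6 0 0 0 0 0 0).
Definition coef6 := pd 0 (X 1) (pt6 0 0 0 0 0 0).
Definition coef7 := pd 1 (X 2) (pt6 0 0 0 0 0 0).
Definition coef8 := X 2 (pt6 0 0 0 0 0 0).
Definition coef9 := X 0 (pt6 0 0 0 0 0 0).
Definition coef10 := X 1 (pt6 0 0 0 0 0 0).

Local Notation moeb c := (c coef1 coef2 coef3 coef4 coef5 coef6 coef7 coef8 coef9 coef10).

Definition X_formula j := unc6 (sel3 (moeb moeb_xi) (moeb moeb_eta) (moeb moeb_tau) j).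

Definition dX_formula (i j : nat) (p : nat -> R) : R :=
  let x := p 0%nat in let y := p 1%nat in let z := p 2%nat in
  match i, j with
  | 0, 0 | 1, 1 | 2, 2 => 2 * coef1 * x + 2 * coef2 * y + 2 * coef3 * z + coef5
  | 0, 1 => -2 * coef1 * y + 2 * coef2 * x - coef6
  | 0, _ => -2 * coef1 * z + 2 * coef3 * x - coef4
  | 1, 0 => 2 * coef1 * y - 2 * coef2 * x + coef6
  | 1, _ => -2 * coef2 * z + 2 * coef3 * y - coef7
  | _, 0 => 2 * coef1 * z - 2 * coef3 * x + coef4
  | _, _ => 2 * coef2 * z - 2 * coef3 * y + coef7
  end.

Ltac derive_formula :=
  cbv beta iota zeta delta [upd pt6 Nat.eqb dX_formula X_formula unc6 sel3
                            moeb_xi moeb_eta moeb_tau];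
  apply is_derive_Reals; auto_derive; [exact I|unfold coef1, coef2, coef3; lra].

Lemma pd_X_eq_formula i j : (i < 3)%nat -> (j < 3)%nat -> forall x y z u v w,
  pd j (X i) (pt6 x y z u v w) = dX_formula i j (pt6 x y z u v w).
Proof.
  intros Hi Hj x y z u v w.
  rewrite (pt6_eq_of_pd (pd j (X i)) (dX_formula i j) (smooth_pd_X i j ltac:(lia))).
  - enough (E : pd j (X i) (pt6 0 0 0 0 0 0) = dX_formula i j (pt6 0 0 0 0 0 0)) by lra.
    destruct i as [|[|[|i]]]; try lia; destruct j as [|[|[|j]]]; try lia;
      cbv beta iota zeta delta [dX_formula]; unfold coef4, coef5, coef6, coef7; cbn [pt6];
      rewrite ?pd_X_diag, ?(pd_X_skew 0 1), ?(pd_X_skew 0 2), ?(pd_X_skew 1 2) by lia; ring.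
  - intros d Hd x' y' z' u' v' w'.
    destruct (Compare_dec.lt_dec d 3).
    + rewrite pd2_X by lia.
      destruct i as [|[|[|i]]]; try lia; destruct j as [|[|[|j]]]; try lia;
        destruct d as [|[|[|d]]]; try lia; derive_formula.
    + rewrite pd_fibre_pd_X by lia.
      destruct i as [|[|[|i]]]; try lia; destruct j as [|[|[|j]]]; try lia;
        destruct d as [|[|[|[|[|[|d]]]]]]; try lia; derive_formula.
Qed.

Lemma X_eq_formula i : (i < 3)%nat -> forall x y z u v w,
  X i (pt6 x y z u v w) = X_formula i (pt6 x y z u v w).
Proof.
  intros Hi x y z u v w.
  rewrite (pt6_eq_of_pd (X i) (X_formula i) (smooth_X i)).
  - enough (E : X i (pt6 0 0 0 0 0 0) = X_formula i (pt6 0 0 0 0 0 0)) by lra.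
    destruct i as [|[|[|i]]]; try lia;
      cbv beta iota zeta delta [X_formula unc6 sel3 moeb_xi moeb_eta moeb_tau];
      unfold coef8, coef9, coef10; cbn [pt6]; ring.
  - intros d Hd x' y' z' u' v' w'.
    destruct (Compare_dec.lt_dec d 3).
    + rewrite pd_X_eq_formula by lia.
      destruct i as [|[|[|i]]]; try lia; destruct d as [|[|[|d]]]; try lia; derive_formula.
    + rewrite pd_fibre_X by lia.
      destruct i as [|[|[|i]]]; try lia; destruct d as [|[|[|[|[|[|d]]]]]]; try lia;
        derive_formula.
Qed.

Lemma pd_fibre_mu d : (3 <= d < 6)%nat -> forall x y z u v w,
  pd d mu (pt6 x y z u v w) = 0.
Proof.
  intros Hd x y z u v w.
  destruct (Nat.eq_dec d 3) as [->|Hd3].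
  - rewrite (pd_pt6_ext mu (pd 4 (Y 1)) (fun x y z u v w => eq_sym (pd_fibre_Y_diag 1
               ltac:(lia) x y z u v w)) 3) by lia.
    rewrite (pd_comm 6 (Y 1) 3 4) by (try apply smooth_Y; lia).
    rewrite (pd_pt6_ext _ (fun p => - pd 1 (X 0) p) (pd_fibre_Y 1 0 ltac:(lia) ltac:(lia)
               ltac:(lia)) 4) by lia.
    rewrite (pd_opp 6), (pd_fibre_pd_X 0 1 4) by (try apply smooth_pd_X; lia). ring.
  - unfold mu. rewrite (pd_comm 6 (Y 0) d 3) by (try apply smooth_Y; lia).
    replace d with (3 + (d - 3))%nat by lia.
    rewrite (pd_pt6_ext _ (fun p => - pd 0 (X (d - 3)) p)
               (pd_fibre_Y 0 (d - 3) ltac:(lia) ltac:(lia) ltac:(lia)) 3) by lia.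
    rewrite (pd_opp 6), (pd_fibre_pd_X (d - 3) 0 3) by (try apply smooth_pd_X; lia). ring.
Qed.

Definition dY k l := pd (3 + l) (Y k).

Lemma smooth_dY k l : (l < 3)%nat -> smooth_n 6 (dY k l).
Proof. intro. apply smooth_pd_Y; lia. Qed.

Lemma pd_fibre_dY k l d : (k < 3)%nat -> (l < 3)%nat -> (3 <= d < 6)%nat ->
  forall x y z u v w, pd d (dY k l) (pt6 x y z u v w) = 0.
Proof.
  intros Hk Hl Hd x y z u v w. unfold dY.
  destruct (Nat.eq_dec k l) as [<-|Hkl].
  - rewrite (pd_pt6_ext _ mu (pd_fibre_Y_diag k Hk) d) by lia. now apply pd_fibre_mu.
  - rewrite (pd_pt6_ext _ (fun p => - pd k (X l) p) (pd_fibre_Y k l Hk Hl Hkl) d) by lia.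
    rewrite (pd_opp 6), pd_fibre_pd_X by (try apply smooth_pd_X; lia). ring.
Qed.

Definition Ybase k (p : nat -> R) : R :=
  Y k p - (p 3%nat * dY k 0 p + p 4%nat * dY k 1 p + p 5%nat * dY k 2 p).

Lemma derivable_Ybase k d p l : (k < 3)%nat -> (d < 6)%nat ->
  l = pd d (Y k) p
      - ((if Nat.eqb 3 d then 1 else 0) * dY k 0 p + p 3%nat * pd d (dY k 0) p
         + ((if Nat.eqb 4 d then 1 else 0) * dY k 1 p + p 4%nat * pd d (dY k 1) p)
         + ((if Nat.eqb 5 d then 1 else 0) * dY k 2 p + p 5%nat * pd d (dY k 2) p)) ->
  derivable_pt_lim (fun t => Ybase k (upd p d t)) (p d) l.
Proof.
  intros Hk Hd ->.
  assert (Dprod : forall l, (l < 3)%nat ->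
    derivable_pt_lim (fun t => upd p d t (3 + l)%nat * dY k l (upd p d t)) (p d)
      ((if Nat.eqb (3 + l) d then 1 else 0) * dY k l p + p (3 + l)%nat * pd d (dY k l) p)).
  { intros l Hl. eapply derivable_pt_lim_mult_eq;
      [apply derivable_pt_lim_upd|apply (smooth_n_derivable 6); auto; apply smooth_dY; lia|].
    now rewrite !upd_id. }
  eapply derivable_pt_lim_minus_eq;
    [apply (smooth_n_derivable 6); auto; apply smooth_Y| |reflexivity].
  eapply derivable_pt_lim_plus_eq; [eapply derivable_pt_lim_plus_eq| |reflexivity];
    [apply (Dprod 0%nat)|apply (Dprod 1%nat)|reflexivity|apply (Dprod 2%nat)]; lia.
Qed.

Lemma pd_zero6_Ybase k d : (k < 3)%nat -> (3 <= d < 6)%nat -> pd_zero6 (Ybase k) d.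
Proof.
  intros Hk Hd x y z u v w. apply derivable_Ybase; try lia.
  rewrite !pd_fibre_dY by lia.
  destruct d as [|[|[|[|[|[|d]]]]]]; try lia; cbn [Nat.eqb]; unfold dY; cbn [Nat.add]; ring.
Qed.

Lemma pd_Y_split k x y z u v w : (k < 3)%nat ->
  pd k (Y k) (pt6 x y z u v w) = pd k (Ybase k) (pt6 x y z u v w)
    + u * pd k (dY k 0) (pt6 x y z u v w) + v * pd k (dY k 1) (pt6 x y z u v w)
    + w * pd k (dY k 2) (pt6 x y z u v w).
Proof.
  intro Hk. rewrite (pd_of_derivable _ _ _ _ (derivable_Ybase k k _ _ Hk ltac:(lia) eq_refl)).
  destruct k as [|[|[|k]]]; try lia; cbn [Nat.eqb pt6]; ring.
Qed.

Lemma Ybase_fibre_const k : (k < 3)%nat -> forall x y z u v w,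
  Ybase k (pt6 x y z u v w) = Ybase k (pt6 x y z 0 0 0).
Proof. intro Hk. apply pd_zero6_fibre_const; apply pd_zero6_Ybase; lia. Qed.

Lemma dY_fibre_const k l : (k < 3)%nat -> (l < 3)%nat -> forall x y z u v w,
  dY k l (pt6 x y z u v w) = dY k l (pt6 x y z 0 0 0).
Proof. intros Hk Hl. apply fibre_const_of_pd; [now apply smooth_dY|]. intros d Hd. now apply pd_fibre_dY. Qed.

Lemma Y_fibre_affine k x y z u v w : (k < 3)%nat ->
  Y k (pt6 x y z u v w) = Ybase k (pt6 x y z 0 0 0)
    + u * dY k 0 (pt6 x y z 0 0 0) + v * dY k 1 (pt6 x y z 0 0 0)
    + w * dY k 2 (pt6 x y z 0 0 0).
Proof.
  intro Hk. rewrite <- Ybase_fibre_const with (u := u) (v := v) (w := w) by lia.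
  rewrite <- !dY_fibre_const with (u := u) (v := v) (w := w) by lia.
  unfold Ybase. cbn [pt6]. ring.
Qed.

Lemma pd_Y_fibre_affine k x y z u v w : (k < 3)%nat ->
  pd k (Y k) (pt6 x y z u v w) = pd k (Ybase k) (pt6 x y z 0 0 0)
    + u * pd k (dY k 0) (pt6 x y z 0 0 0) + v * pd k (dY k 1) (pt6 x y z 0 0 0)
    + w * pd k (dY k 2) (pt6 x y z 0 0 0).
Proof.
  intro Hk. rewrite pd_Y_split by lia.
  rewrite (pd_fibre_const _ (Ybase_fibre_const k Hk) k Hk).
  rewrite (pd_fibre_const _ (dY_fibre_const k 0 Hk ltac:(lia)) k Hk),
    (pd_fibre_const _ (dY_fibre_const k 1 Hk ltac:(lia)) k Hk),
    (pd_fibre_const _ (dY_fibre_const k 2 Hk ltac:(lia)) k Hk).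
  ring.
Qed.

Lemma mu_fibre_const x y z u v w : mu (pt6 x y z u v w) = mu (pt6 x y z 0 0 0).
Proof. apply fibre_const_of_pd; [apply smooth_pd_Y; lia|exact pd_fibre_mu]. Qed.

Lemma nu_fibre_const x y z u v w : nu (pt6 x y z u v w) = nu (pt6 x y z 0 0 0).
Proof. apply fibre_const_of_pd; [exact smooth_nu|exact pd_fibre_nu]. Qed.

Lemma X_fibre_const j x y z u v w : (j < 3)%nat ->
  X j (pt6 x y z u v w) = X j (pt6 x y z 0 0 0).
Proof.
  intro Hj. rewrite !X_eq_formula by lia. destruct j as [|[|[|j]]]; try lia; reflexivity.
Qed.

Lemma residual_polynomial x y z u v w : let B := pt6 x y z 0 0 0 in
  - (X 0 B * D3 0 q x y z + X 1 B * D3 1 q x y z + X 2 B * D3 2 q x y z)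
  + 2 * u * (Ybase 0 B + u * dY 0 0 B + v * dY 0 1 B + w * dY 0 2 B)
  + 2 * v * (Ybase 1 B + u * dY 1 0 B + v * dY 1 1 B + w * dY 1 2 B)
  + 2 * w * (Ybase 2 B + u * dY 2 0 B + v * dY 2 1 B + w * dY 2 2 B)
  - ((pd 0 (Ybase 0) B + u * pd 0 (dY 0 0) B + v * pd 0 (dY 0 1) B + w * pd 0 (dY 0 2) B)
     + (pd 1 (Ybase 1) B + u * pd 1 (dY 1 0) B + v * pd 1 (dY 1 1) B + w * pd 1 (dY 1 2) B)
     + (pd 2 (Ybase 2) B + u * pd 2 (dY 2 0) B + v * pd 2 (dY 2 1) B + w * pd 2 (dY 2 2) B))
  - (u^2+v^2+w^2 - q x y z) * (mu B - nu B) = 0.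
Proof.
  pose proof (residual_eq x y z u v w) as E.
  rewrite !(X_fibre_const _ x y z u v w), !(Y_fibre_affine _ x y z u v w),
    !(pd_Y_fibre_affine _ x y z u v w), (mu_fibre_const x y z u v w),
    (nu_fibre_const x y z u v w) in E by lia.
  exact E.
Qed.

Lemma mu_eq x y z u v w : mu (pt6 x y z u v w) = - nu (pt6 x y z u v w).
Proof.
  rewrite mu_fibre_const, nu_fibre_const.
  pose proof (residual_polynomial x y z 1 0 0) as E1.
  pose proof (residual_polynomial x y z (-1) 0 0) as E2.
  pose proof (residual_polynomial x y z 0 0 0) as E3.
  pose proof (pd_fibre_Y_diag 0 ltac:(lia) x y z 0 0 0) as E4. fold (dY 0 0) in E4.
  cbv zeta in E1, E2, E3. lra.
Qed.

Lemma dY_eq k l : (k < 3)%nat -> (l < 3)%nat -> forall x y z u v w,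
  dY k l (pt6 x y z u v w) = - pd k (X l) (pt6 x y z u v w).
Proof.
  intros Hk Hl x y z u v w. unfold dY.
  destruct (Nat.eq_dec k l) as [<-|Hkl].
  - now rewrite pd_fibre_Y_diag, mu_eq, pd_X_diag by lia.
  - now apply pd_fibre_Y.
Qed.

Lemma pd_dY_eq k l : (k < 3)%nat -> (l < 3)%nat -> forall x y z u v w,
  pd k (dY k l) (pt6 x y z u v w) = - pd k (pd k (X l)) (pt6 x y z u v w).
Proof.
  intros Hk Hl x y z u v w.
  rewrite (pd_pt6_ext _ (fun p => - pd k (X l) p) (dY_eq k l Hk Hl) k) by lia.
  apply (pd_opp 6); [apply smooth_pd_X|]; lia.
Qed.

Lemma Ybase_eq m : (m < 3)%nat -> forall x y z u v w,
  Ybase m (pt6 x y z u v w) = grad_nu m / 2.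
Proof.
  intros Hm x y z u v w. rewrite Ybase_fibre_const by lia.
  pose proof (residual_polynomial x y z 1 0 0) as E1.
  pose proof (residual_polynomial x y z (-1) 0 0) as E2.
  pose proof (residual_polynomial x y z 0 1 0) as E3.
  pose proof (residual_polynomial x y z 0 (-1) 0) as E4.
  pose proof (residual_polynomial x y z 0 0 1) as E5.
  pose proof (residual_polynomial x y z 0 0 (-1)) as E6.
  cbv zeta in E1, E2, E3, E4, E5, E6.
  rewrite !pd_dY_eq, !pd2_X in E1, E2, E3, E4, E5, E6 by lia.
  cbn [Nat.eqb] in E1, E2, E3, E4, E5, E6.
  destruct m as [|[|[|m]]]; try lia; lra.
Qed.

Lemma potential_eq x y z : let B := pt6 x y z 0 0 0 in
  - (X 0 B * D3 0 q x y z + X 1 B * D3 1 q x y z + X 2 B * D3 2 q x y z)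
  - 2 * nu B * q x y z = 0.
Proof.
  pose proof (residual_polynomial x y z 0 0 0) as E. cbv zeta in *.
  assert (Ed : forall k, (k < 3)%nat -> pd k (Ybase k) (pt6 x y z 0 0 0) = 0).
  { intros k Hk.
    rewrite (pd_pt6_ext _ (fun _ => grad_nu k / 2) (Ybase_eq k Hk) k) by lia.
    apply pd_const. }
  assert (Hmu : q x y z * mu (pt6 x y z 0 0 0) = - (q x y z * nu (pt6 x y z 0 0 0)))
    by (rewrite mu_eq; ring).
  rewrite (Ed 0%nat), (Ed 1%nat), (Ed 2%nat) in E by lia. lra.
Qed.

Lemma Y_eq_formula k : (k < 3)%nat -> forall x y z u v w,
  Y k (pt6 x y z u v w) = grad_nu k / 2 - (u * pd k (X 0) (pt6 x y z u v w)
     + v * pd k (X 1) (pt6 x y z u v w) + w * pd k (X 2) (pt6 x y z u v w)).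
Proof.
  intros Hk x y z u v w.
  replace (Y k (pt6 x y z u v w)) with (Ybase k (pt6 x y z u v w)
    + u * dY k 0 (pt6 x y z u v w) + v * dY k 1 (pt6 x y z u v w)
    + w * dY k 2 (pt6 x y z u v w)) by (unfold Ybase; cbn [pt6]; ring).
  rewrite Ybase_eq, !dY_eq by lia. ring.
Qed.

Lemma moebius_of_symmetry :
  moebius_generator coef1 coef2 coef3 coef4 coef5 coef6 coef7 coef8 coef9 coef10
    xi eta tau phi psi zeta
  /\ potential_condition coef1 coef2 coef3 coef4 coef5 coef6 coef7 coef8 coef9 coef10 q.
Proof.
  split.
  - intros x y z u v w.
    change (xi x y z u v w) with (X 0 (pt6 x y z u v w)).
    change (eta x y z u v w) with (X 1 (pt6 x y z u v w)).
    change (tau x y z u v w) with (X 2 (pt6 x y z u v w)).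
    change (phi x y z u v w) with (Y 0 (pt6 x y z u v w)).
    change (psi x y z u v w) with (Y 1 (pt6 x y z u v w)).
    change (zeta x y z u v w) with (Y 2 (pt6 x y z u v w)).
    rewrite !X_eq_formula, !Y_eq_formula, !pd_X_eq_formula by lia.
    cbv beta iota zeta delta [X_formula dX_formula unc6 sel3 pt6
      moeb_xi moeb_eta moeb_tau moeb_phi moeb_psi moeb_zeta].
    unfold coef1, coef2, coef3. repeat split; ring.
  - intros x y z. pose proof (potential_eq x y z) as E. cbv zeta in E.
    rewrite !X_eq_formula in E by lia. unfold nu in E. rewrite pd_X_eq_formula in E by lia.
    cbv beta iota zeta delta [X_formula dX_formula unc6 sel3 pt6 moeb_xi moeb_eta moeb_tau]
      in E.
    lra.
Qed.

End Forward.

Theorem mainTheorem5 (q : F3) (xi eta tau phi psi zeta : F6)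
  (Hq : smooth3 q)
  (Hxi : smooth6 xi) (Heta : smooth6 eta) (Htau : smooth6 tau)
  (Hphi : smooth6 phi) (Hpsi : smooth6 psi) (Hzeta : smooth6 zeta) :
  is_symmetry_generator q xi eta tau phi psi zeta <->
  exists a1 a2 a3 a4 a5 a6 a7 a8 a9 a10 : R,
    (forall x y z u v w : R,
      xi x y z u v w = a1 * (x ^ 2 - y ^ 2 - z ^ 2) + 2 * a2 * x * y
                       + 2 * a3 * x * z - a4 * z + a5 * x - a6 * y + a9
      /\ eta x y z u v w = 2 * a1 * x * y + a2 * (y ^ 2 - x ^ 2 - z ^ 2)
                       + 2 * a3 * y * z + a5 * y + a6 * x - a7 * z + a10
      /\ tau x y z u v w = 2 * a1 * x * z + 2 * a2 * y * z
                       + a3 * (z ^ 2 - x ^ 2 - y ^ 2) + a4 * x + a5 * z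
                       + a7 * y + a8
      /\ phi x y z u v w = a1 * (1 - 2 * (x * u + y * v + z * w))
                       + 2 * a2 * (x * v - y * u) + 2 * a3 * (x * w - z * u)
                       - a4 * w - a5 * u - a6 * v
      /\ psi x y z u v w = 2 * a1 * (y * u - x * v)
                       + a2 * (1 - 2 * (x * u + y * v + z * w))
                       - 2 * a3 * (z * v - y * w) - a5 * v + a6 * u - a7 * w
      /\ zeta x y z u v w = 2 * a1 * (z * u - x * w) + 2 * a2 * (z * v - y * w)
                       + a3 * (1 - 2 * (x * u + y * v + z * w))
                       + a4 * u - a5 * w + a7 * v)
    /\
    (forall x y z : R,
      (a1 * (y ^ 2 + z ^ 2 - x ^ 2) - 2 * a2 * x * y - 2 * a3 * x * z
         + a4 * z - a5 * x + a6 * y - a9) * D3 0 q x y z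
      + (- 2 * a1 * x * y + a2 * (x ^ 2 + z ^ 2 - y ^ 2) - 2 * a3 * y * z
         - a5 * y - a6 * x + a7 * z - a10) * D3 1 q x y z
      + (- 2 * a1 * x * z - 2 * a2 * y * z + a3 * (x ^ 2 + y ^ 2 - z ^ 2)
         - a4 * x - a5 * z - a7 * y - a8) * D3 2 q x y z
      - 2 * (a5 + 2 * (a1 * x + a2 * y + a3 * z)) * q x y z = 0).
Proof.
  split.
  - intro H. do 10 eexists.
    exact (moebius_of_symmetry q xi eta tau phi psi zeta Hxi Heta Htau Hphi Hpsi Hzeta H).
  - intros (a1 & a2 & a3 & a4 & a5 & a6 & a7 & a8 & a9 & a10 & Hgen & Hpot).
    exact (symmetry_of_moebius_generator a1 a2 a3 a4 a5 a6 a7 a8 a9 a10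
             q xi eta tau phi psi zeta Hgen Hpot).
Qed.
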